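(* Let $X$ and $Y$ be random variables on finite alphabets with joint distribution $p(x_i,y_j)$, marginals $p(x_i)$, $p(y_j)$, and conditional probabilities $p(x_i\mid y_j)$ (defined whenever $p(y_j)>0$). For every $0<\varpi\le 2$, $$\Phi_\varpi(X\|Y)=L(\varpi,X)-L(\varpi,X\mid Y)\ \ge 0 .$$
   Context: For a discrete random variable $X$ with distribution $\{p(x_1),\dots,p(x_n)\}$ the message importance measure (MIM) is $L(\varpi,X)=\sum_i p(x_i)e^{\varpi(1-p(x_i))}$. For a pair $(X,Y)$ the conditional message importance measure (CMIM) is $L(\varpi,X\mid Y)=\sum_{j:\,p(y_j)>0} p(y_j)\sum_i p(x_i\mid y_j)e^{\varpi(1-p(x_i\mid y_j))}$. The message importance loss is $\Phi_\varpi(X\|Y)=L(\varpi,X)-L(\varpi,X\mid Y)$. *)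

From Stdlib Require Import Reals.
Open Scope R_scope.

Fixpoint rsum (n : nat) (f : nat -> R) : R :=
  match n with
  | O => 0
  | S k => rsum k f + f k
  end.

(* A joint distribution of (X,Y) on alphabets {x_0..x_{n-1}} x {y_0..y_{m-1}},
   given by p i j = p(x_i, y_j). *)
Definition is_joint_dist (n m : nat) (p : nat -> nat -> R) : Prop :=
  (forall i j, (i < n)%nat -> (j < m)%nat -> 0 <= p i j) /\
  rsum n (fun i => rsum m (fun j => p i j)) = 1.

Definition px (m : nat) (p : nat -> nat -> R) (i : nat) : R := rsum m (fun j => p i j).
Definition py (n : nat) (p : nat -> nat -> R) (j : nat) : R := rsum n (fun i => p i j).

(* conditional probability p(x_i | y_j), used only when p(y_j) > 0 *)
Definition pcond (n : nat) (p : nat -> nat -> R) (i j : nat) : R := p i j / py n p j.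

Definition MIM (w : R) (n : nat) (q : nat -> R) : R :=
  rsum n (fun i => q i * exp (w * (1 - q i))).

Definition CMIM (w : R) (n m : nat) (p : nat -> nat -> R) : R :=
  rsum m (fun j =>
    if Rlt_dec 0 (py n p j)
    then py n p j * MIM w n (fun i => pcond n p i j)
    else 0).

Definition Phi (w : R) (n m : nat) (p : nat -> nat -> R) : R :=
  MIM w n (px m p) - CMIM w n m p.

(** For fixed [x_i], the conditional measure averages [f (p(x_i|y_j))] with
    weights [p(y_j)], where [f t = t * exp (w * (1 - t))], while the
    unconditional one evaluates [f] at the average [p(x_i)] of these points.
    Since [f''(t) = w * exp (w * (1 - t)) * (w * t - 2)], the function [f] is
    concave on [[0, 1]] exactly when [w <= 2], so Jensen's inequality, in the
    form of the tangent-line bound at [p(x_i)], gives [Phi >= 0]. *)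

From Stdlib Require Import Reals Lra Lia Psatz.
From Coquelicot Require Import Coquelicot.
Open Scope R_scope.

Lemma one_sub_mul_exp_le_1 (x : R) : (1 - x) * exp x <= 1.
Proof.
  pose proof (exp_ineq1_le (- x)) as Hneg.
  pose proof (exp_pos x) as Hpos.
  assert (exp (- x) * exp x = 1)
    by (rewrite <- exp_plus; replace (- x + x) with 0 by ring; apply exp_0).
  nra.
Qed.

Lemma two_sub_mul_exp_le (x : R) : 0 <= x -> (2 - x) * exp x <= 2 + x.
Proof.
  intros Hx. destruct (Req_dec x 0) as [-> | Hx0].
  { rewrite exp_0; lra. }
  destruct (MVT_cor2 (fun t => (2 - t) * exp t - (2 + t))
              (fun t => (1 - t) * exp t - 1) 0 x) as [c [Hmvt Hc]].
  - lra.
  - intros c _. apply is_derive_Reals. auto_derive; auto. ring.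
  - rewrite exp_0 in Hmvt. pose proof one_sub_mul_exp_le_1 c. nra.
Qed.

Lemma exp_le_taylor2 (x : R) : x <= 0 -> exp x <= 1 + x + x ^ 2 / 2.
Proof.
  intros Hx. destruct (Req_dec x 0) as [-> | Hx0].
  { rewrite exp_0; lra. }
  destruct (MVT_cor2 (fun t => exp t - 1 - t - t ^ 2 / 2)
              (fun t => exp t - 1 - t) x 0) as [c [Hmvt Hc]].
  - lra.
  - intros c _. apply is_derive_Reals. auto_derive; auto. field.
  - rewrite exp_0 in Hmvt. pose proof exp_ineq1_le c. nra.
Qed.

Lemma mul_exp_remainder_le_sqr (s x : R) :
  0 <= s -> s <= 2 -> s + x <= 2 -> s * (exp x - 1 - x) <= x ^ 2.
Proof.
  intros Hs Hs2 Hsx.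
  pose proof (exp_ineq1_le x) as Hrem.
  destruct (Rle_dec 0 x) as [Hx | Hx].
  - pose proof two_sub_mul_exp_le x Hx. nra.
  - pose proof exp_le_taylor2 x ltac:(lra). nra.
Qed.

Definition mim_term (w t : R) : R := t * exp (w * (1 - t)).

Lemma mim_term_tangent (w a q : R) :
  0 < w <= 2 -> 0 <= a <= 1 -> 0 <= q <= 1 ->
  mim_term w q <= mim_term w a + exp (w * (1 - a)) * (1 - w * a) * (q - a).
Proof.
  intros Hw Ha Hq. unfold mim_term.
  replace (exp (w * (1 - q))) with (exp (w * (1 - a)) * exp (w * (a - q)))
    by (rewrite <- exp_plus; f_equal; ring).
  pose proof (mul_exp_remainder_le_sqr (q * w) (w * (a - q))
                 ltac:(nra) ltac:(nra) ltac:(nra)) as Hrem.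
  assert (Hred : q * exp (w * (a - q)) <= q + w * a * (a - q)) by nra.
  pose proof exp_pos (w * (1 - a)). nra.
Qed.

(** The term [p(y) * f (p(x|y))] of the conditional measure, as a function of
    [b = p(y)] and [c = p(x, y)]. *)
Definition mim_persp (w b c : R) : R :=
  if Rlt_dec 0 b then b * mim_term w (c / b) else 0.

Lemma mim_persp_le_tangent (w a b c : R) :
  0 < w <= 2 -> 0 <= a <= 1 -> 0 <= c <= b ->
  mim_persp w b c
    <= mim_term w a * b + exp (w * (1 - a)) * (1 - w * a) * (c - a * b).
Proof.
  intros Hw Ha Hcb. unfold mim_persp.
  destruct (Rlt_dec 0 b) as [Hb | Hb].
  - assert (Hq : 0 <= c / b <= 1).
    { split.
      - apply Rdiv_le_0_compat; lra.
      - apply Rmult_le_reg_l with b; [lra|].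
        replace (b * (c / b)) with c by (field; lra). lra. }
    pose proof (mim_term_tangent w a (c / b) Hw Ha Hq) as Htan.
    replace (c - a * b) with (b * (c / b - a)) by (field; lra).
    pose proof Rmult_le_compat_l b _ _ ltac:(lra) Htan. lra.
  - replace b with 0 by lra. replace c with 0 by lra. lra.
Qed.

Lemma rsum_ext (n : nat) (f g : nat -> R) :
  (forall k, (k < n)%nat -> f k = g k) -> rsum n f = rsum n g.
Proof. induction n; simpl; intros H; auto. rewrite IHn, H; auto. Qed.

Lemma rsum_le (n : nat) (f g : nat -> R) :
  (forall k, (k < n)%nat -> f k <= g k) -> rsum n f <= rsum n g.
Proof.
  induction n; simpl; intros H; [lra|].
  pose proof H n (Nat.lt_succ_diag_r n).
  pose proof IHn (fun k Hk => H k (Nat.lt_lt_succ_r _ _ Hk)). lra.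
Qed.

Lemma rsum_zero (n : nat) : rsum n (fun _ => 0) = 0.
Proof. induction n; simpl; [lra|]. rewrite IHn; ring. Qed.

Lemma rsum_plus (n : nat) (f g : nat -> R) :
  rsum n (fun k => f k + g k) = rsum n f + rsum n g.
Proof. induction n; simpl; [lra|]. rewrite IHn; ring. Qed.

Lemma rsum_minus (n : nat) (f g : nat -> R) :
  rsum n (fun k => f k - g k) = rsum n f - rsum n g.
Proof. induction n; simpl; [lra|]. rewrite IHn; ring. Qed.

Lemma rsum_scal (n : nat) (c : R) (f : nat -> R) :
  rsum n (fun k => c * f k) = c * rsum n f.
Proof. induction n; simpl; [lra|]. rewrite IHn; ring. Qed.

Lemma rsum_swap (n m : nat) (f : nat -> nat -> R) :
  rsum n (fun i => rsum m (fun j => f i j)) = rsum m (fun j => rsum n (fun i => f i j)).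
Proof.
  induction n; simpl; [symmetry; apply rsum_zero|].
  rewrite IHn, <- rsum_plus. reflexivity.
Qed.

Lemma rsum_nonneg (n : nat) (f : nat -> R) :
  (forall k, (k < n)%nat -> 0 <= f k) -> 0 <= rsum n f.
Proof. intros H. rewrite <- (rsum_zero n). apply rsum_le. auto. Qed.

Lemma le_rsum (n : nat) (f : nat -> R) (k : nat) :
  (forall k, (k < n)%nat -> 0 <= f k) -> (k < n)%nat -> f k <= rsum n f.
Proof.
  induction n; simpl; intros H Hk; [lia|].
  assert (H' : forall k, (k < n)%nat -> 0 <= f k) by (intros; apply H; lia).
  destruct (Nat.eq_dec k n) as [-> | Hkn].
  - pose proof rsum_nonneg n f H'. lra.
  - pose proof IHn H' ltac:(lia). pose proof H n ltac:(lia). lra.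
Qed.

Lemma rsum_mim_persp_le (w : R) (m : nat) (b c : nat -> R) :
  0 < w <= 2 -> (forall j, (j < m)%nat -> 0 <= c j <= b j) ->
  rsum m b = 1 -> 0 <= rsum m c <= 1 ->
  rsum m (fun j => mim_persp w (b j) (c j)) <= mim_term w (rsum m c).
Proof.
  intros Hw Hcb Hb Hc.
  set (a := rsum m c).
  set (slope := exp (w * (1 - a)) * (1 - w * a)).
  eapply Rle_trans.
  { apply (rsum_le m _ (fun j => mim_term w a * b j + slope * (c j - a * b j))).
    intros j Hj. apply mim_persp_le_tangent; auto. }
  rewrite rsum_plus, rsum_scal, rsum_scal, rsum_minus, rsum_scal, Hb.
  fold a. lra.
Qed.

Lemma CMIM_double_sum (w : R) (n m : nat) (p : nat -> nat -> R) :
  CMIM w n m p = rsum n (fun i => rsum m (fun j => mim_persp w (py n p j) (p i j))).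
Proof.
  rewrite rsum_swap. unfold CMIM. apply rsum_ext. intros j _. unfold mim_persp.
  destruct (Rlt_dec 0 (py n p j)).
  - unfold MIM. rewrite <- rsum_scal. reflexivity.
  - symmetry. apply rsum_zero.
Qed.

Theorem mainTheorem1 (n m : nat) (p : nat -> nat -> R) (w : R) :
  is_joint_dist n m p -> 0 < w <= 2 -> 0 <= Phi w n m p.
Proof.
  intros [Hp Hsum] Hw.
  assert (Hpy_nonneg : forall j, (j < m)%nat -> 0 <= py n p j)
    by (intros; apply rsum_nonneg; auto).
  assert (Hpx_nonneg : forall i, (i < n)%nat -> 0 <= px m p i)
    by (intros; apply rsum_nonneg; auto).
  assert (Hpy_sum : rsum m (py n p) = 1) by (unfold py; rewrite <- rsum_swap; exact Hsum).
  unfold Phi. rewrite CMIM_double_sum. unfold MIM. rewrite <- rsum_minus.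
  apply rsum_nonneg. intros i Hi.
  enough (rsum m (fun j => mim_persp w (py n p j) (p i j)) <= mim_term w (px m p i))
    by (unfold mim_term in *; lra).
  apply rsum_mim_persp_le; auto.
  - intros j Hj. split; [auto|].
    apply (le_rsum n (fun k => p k j)); auto.
  - split; [exact (Hpx_nonneg i Hi)|].
    rewrite <- Hsum. exact (le_rsum n (px m p) i Hpx_nonneg Hi).
Qed.
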